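(* The Banach space $Y$ (the predual of $\mathcal{F}(\mathcal{M})$ described in the context) is not polyhedral, i.e. there is a finite-dimensional subspace of $Y$ whose unit ball is not a polytope.
   Context: For a pointed metric space $M$, ${\mathrm{Lip}}_0(M)$ is the space of real Lipschitz functions vanishing at the base point, normed by the Lipschitz constant $\|\cdot\|_L$. A function $f$ on a metric space is locally flat if $\lim_{x,y\to z}\frac{f(x)-f(y)}{d(x,y)}=0$ for every $z$. Let $p=(0,0)$, $q=(1,0)$, $S_n=\{(2^{-n}k,2^{-n}):k=0,\dots,2^n\}$ for $n\in\mathbb{N}$, and $\mathcal{M}=\{p,q\}\cup\bigcup_n S_n$ with the metric $d((x_1,y_1),(x_2,y_2))=|x_1-x_2|$ if $y_1=y_2$ and $=|y_1-y_2|+\min\{x_1+x_2,2-(x_1+x_2)\}$ if $y_1\neq y_2$, base point $p$. Let $V=\{(x,y)\in\mathcal{M}:x\in\{0,1\}\}$, $h(x,y)=x$, and $Y=\{f\in{\mathrm{Lip}}_0(\mathcal{M}):\lim_n\|(f-f(q)h)|_{S_n}\|_L=0,\ f|_V\text{ locally flat}\}$ with the Lipschitz norm. *)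

From Stdlib Require Import Reals Lra Lia.
Open Scope R_scope.

Definition pt := (R * R)%type.

Definition inS (n : nat) (z : pt) : Prop :=
  exists k : nat, (k <= 2 ^ n)%nat /\ fst z = INR k / 2 ^ n /\ snd z = / 2 ^ n.

Definition inM (z : pt) : Prop :=
  z = (0, 0) \/ z = (1, 0) \/ exists n : nat, (1 <= n)%nat /\ inS n z.

Definition Mpt : Type := { z : pt | inM z }.

Definition pM : Mpt := exist inM (0, 0) (or_introl eq_refl).
Definition qM : Mpt := exist inM (1, 0) (or_intror (or_introl eq_refl)).

Definition dist_pt (z w : pt) : R :=
  if Req_EM_T (snd z) (snd w) then Rabs (fst z - fst w)
  else Rabs (snd z - snd w) + Rmin (fst z + fst w) (2 - (fst z + fst w)).

Definition d (x y : Mpt) : R := dist_pt (proj1_sig x) (proj1_sig y).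

Definition h (x : Mpt) : R := fst (proj1_sig x).

Definition inV (x : Mpt) : Prop := fst (proj1_sig x) = 0 \/ fst (proj1_sig x) = 1.

Definition is_Lip0 (f : Mpt -> R) : Prop :=
  f pM = 0 /\ exists L : R, forall x y : Mpt, Rabs (f x - f y) <= L * d x y.

Definition Lip_le (f : Mpt -> R) (c : R) : Prop :=
  forall x y : Mpt, Rabs (f x - f y) <= c * d x y.

Definition Sn_cond (f : Mpt -> R) : Prop :=
  forall eps : R, 0 < eps -> exists N : nat, forall n : nat, (N <= n)%nat ->
    forall x y : Mpt, inS n (proj1_sig x) -> inS n (proj1_sig y) ->
      Rabs ((f x - f qM * h x) - (f y - f qM * h y)) <= eps * d x y.

Definition V_locally_flat (f : Mpt -> R) : Prop :=
  forall z : Mpt, inV z -> forall eps : R, 0 < eps -> exists delta : R, 0 < delta /\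
    forall x y : Mpt, inV x -> inV y -> x <> y -> d x z < delta -> d y z < delta ->
      Rabs (f x - f y) <= eps * d x y.

Definition inY (f : Mpt -> R) : Prop :=
  is_Lip0 f /\ Sn_cond f /\ V_locally_flat f.

Fixpoint fsum (k : nat) (g : nat -> R) : R :=
  match k with
  | O => 0
  | S k' => fsum k' g + g k'
  end.

Definition in_span (k : nat) (b : nat -> Mpt -> R) (f : Mpt -> R) : Prop :=
  exists a : nat -> R, forall x : Mpt, f x = fsum k (fun i => a i * b i x).

Definition in_conv (m : nat) (c : nat -> Mpt -> R) (f : Mpt -> R) : Prop :=
  exists lam : nat -> R, (forall i, (i < m)%nat -> 0 <= lam i) /\ fsum m lam = 1 /\
    forall x : Mpt, f x = fsum m (fun i => lam i * c i x).

Definition unit_ball_is_polytope (k : nat) (b : nat -> Mpt -> R) : Prop :=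
  exists (m : nat) (c : nat -> Mpt -> R), forall f : Mpt -> R,
    (in_span k b f /\ Lip_le f 1) <-> in_conv m c f.

(* Write every point z of M as z = (h z, ht z).  A "profile function" is a
   function h(z) * Q(ht z) for a real profile Q.  If |Q| <= 1 on [0,1/2] and
   |Q y1 - Q y2| <= (y1 + y2) |y1 - y2| (a Lipschitz bound whose constant
   vanishes at height 0), the profile function has Lipschitz norm <= 1 and
   lies in Y: the factor y1 + y2 gives both the decay along the levels S_n
   and the local flatness on V.

   Take E = span(b0, b1) with profiles 1 - y^4 and y^2.  For n >= 0 let
   P1 n = (1, t_n), P0 n = (0, t_n) with t_n = 2^-(n+1), so d(P1 n, P0 n) = 1,
   and let gap n G = G(P1 n) - G(P0 n); on E, gap n is the quadratic
   a0 (1 - s^2) + a1 s evaluated at s = t_n^2, and on the unit ball gap n <= 1.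
   For every s in [0,1/4] the profile 1 - (y^2 - s)^2/(1 + s^2) gives an
   element of the unit ball of E with gap n = 1 at s = t_n^2.  Hence if the
   ball were the convex hull of c 0, ..., c (m-1), every n would have a vertex
   with gap n >= 1; by pigeonhole one vertex does so at two even indices, and
   a quadratic that is <= 1 at three points s2 < s3 < s1 and >= 1 at s1, s2
   cannot exist. *)

From Stdlib Require Import Reals Lra Lia Classical.
Open Scope R_scope.

Definition ht (z : Mpt) : R := snd (proj1_sig z).

Lemma pow2_pos n : 0 < 2 ^ n.
Proof. apply pow_lt; lra. Qed.

Lemma pow2_ge2 n : (1 <= n)%nat -> 2 <= 2 ^ n.
Proof.
  intros Hn. replace 2 with (2 ^ 1) at 1 by (simpl; ring).
  apply Rle_pow; lra || lia.
Qed.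

Lemma inv_pow2_lt a b : (a < b)%nat -> / 2 ^ b <= / 2 ^ a / 2.
Proof.
  intros H. unfold Rdiv. rewrite <- Rinv_mult.
  apply Rinv_le_contravar.
  - apply Rmult_lt_0_compat; [apply pow2_pos | lra].
  - replace (2 ^ a * 2) with (2 ^ (S a)) by (simpl; ring).
    apply Rle_pow; lra || lia.
Qed.

Lemma inv_pow2_small eps : 0 < eps -> exists N, forall n, (N <= n)%nat -> / 2 ^ n < eps.
Proof.
  intros Heps. destruct (pow_lt_1_zero (/2)) with (y := eps) as [N HN]; auto.
  { rewrite Rabs_right; lra. }
  exists N. intros n Hn. specialize (HN n Hn). rewrite pow_inv in HN.
  rewrite Rabs_right in HN; auto. left; apply Rinv_0_lt_compat, pow2_pos.
Qed.

Lemma M_bounds z : 0 <= h z <= 1 /\ 0 <= ht z <= / 2.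
Proof.
  destruct z as [[a b] H]; unfold h, ht; simpl.
  destruct H as [H|[H|[n [Hn [k [Hk [H1 H2]]]]]]].
  - injection H; intros; subst; lra.
  - injection H; intros; subst; lra.
  - simpl in H1, H2. subst.
    pose proof (pow2_pos n). pose proof (pow2_ge2 n Hn).
    split; split.
    + unfold Rdiv. apply Rmult_le_pos; [apply pos_INR | left; apply Rinv_0_lt_compat; lra].
    + apply le_INR in Hk. rewrite pow_INR in Hk.
      replace (INR 2) with 2 in Hk by (simpl; ring).
      unfold Rdiv. apply (Rmult_le_reg_r (2 ^ n)); [lra|].
      rewrite Rmult_assoc, Rinv_l by lra. lra.
    + left; apply Rinv_0_lt_compat; lra.
    + apply Rinv_le_contravar; lra.
Qed.

Lemma d_ge_coords x y : Rabs (ht x - ht y) <= d x y /\ Rabs (h x - h y) <= d x y.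
Proof.
  pose proof (M_bounds x); pose proof (M_bounds y).
  unfold d, dist_pt, ht, h in *.
  destruct (Req_EM_T _ _) as [e|ne].
  - rewrite e. unfold Rminus; rewrite Rplus_opp_r, Rabs_R0. split; [apply Rabs_pos | lra].
  - set (sx := fst (proj1_sig x) + fst (proj1_sig y)).
    assert (0 <= Rmin sx (2 - sx)) by (apply Rmin_glb; unfold sx; lra).
    assert (Rabs (fst (proj1_sig x) - fst (proj1_sig y)) <= Rmin sx (2 - sx))
      by (apply Rmin_glb; apply Rabs_le; unfold sx; lra).
    pose proof (Rabs_pos (snd (proj1_sig x) - snd (proj1_sig y))).
    split; lra.
Qed.

Lemma d_nonneg x y : 0 <= d x y.
Proof. destruct (d_ge_coords x y). pose proof (Rabs_pos (ht x - ht y)). lra. Qed.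

Lemma d_same_level x y : ht x = ht y -> d x y = Rabs (h x - h y).
Proof.
  unfold d, dist_pt, ht, h. intros e. destruct (Req_EM_T _ _); [reflexivity | contradiction].
Qed.

Lemma level_gap z w : 0 < ht z -> ht w <> ht z -> ht z / 2 <= Rabs (ht w - ht z).
Proof.
  destruct z as [[a b] H]; destruct w as [[a' b'] H']; unfold ht; simpl.
  intros Hz Hne.
  destruct H as [H|[H|[n [Hn [k [Hk [H1 H2]]]]]]];
    [injection H; intros; subst; simpl in Hz; lra
    |injection H; intros; subst; simpl in Hz; lra|].
  simpl in H2; subst b.
  pose proof (pow2_pos n).
  assert (0 < / 2 ^ n) by (apply Rinv_0_lt_compat; lra).
  destruct H' as [H'|[H'|[m [Hm [k' [Hk' [H1' H2']]]]]]].
  - injection H'; intros; subst. rewrite Rabs_left by lra. lra.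
  - injection H'; intros; subst. rewrite Rabs_left by lra. lra.
  - simpl in H2'; subst b'.
    destruct (Nat.lt_total m n) as [Hl|[He|Hl]].
    + pose proof (inv_pow2_lt _ _ Hl). rewrite Rabs_right by lra. lra.
    + subst; contradiction.
    + pose proof (inv_pow2_lt _ _ Hl).
      assert (0 < / 2 ^ m) by (apply Rinv_0_lt_compat; apply pow2_pos).
      rewrite Rabs_left by lra. lra.
Qed.

Lemma V_same_side x z : inV x -> inV z -> d x z < 1 -> h x = h z.
Proof.
  intros Vx Vz Hd. destruct (d_ge_coords x z) as [_ Hh].
  unfold inV in Vx, Vz. fold (h x) in Vx. fold (h z) in Vz.
  destruct Vx as [e1|e1]; destruct Vz as [e2|e2]; rewrite e1, e2 in *; try reflexivity;
    [rewrite Rabs_left in Hh by lra | rewrite Rabs_right in Hh by lra]; lra.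
Qed.

Definition profile (Q : R -> R) (z : Mpt) : R := h z * Q (ht z).

Definition slope_bound (Q : R -> R) : Prop :=
  forall y1 y2, 0 <= y1 <= / 2 -> 0 <= y2 <= / 2 ->
    Rabs (Q y1 - Q y2) <= (y1 + y2) * Rabs (y1 - y2).

Definition admissible (Q : R -> R) : Prop :=
  (forall y, 0 <= y <= / 2 -> Rabs (Q y) <= 1) /\ slope_bound Q.

(* If |Q| <= A and Q is A-Lipschitz, then h * Q(ht) is A-Lipschitz on M: on
   one level this is clear, and across levels d is the height difference plus
   the cheaper of the detours through x = 0 and through x = 1. *)
Lemma profile_Lip (Q : R -> R) (A : R) :
  0 <= A ->
  (forall y, 0 <= y <= / 2 -> Rabs (Q y) <= A) ->
  (forall y1 y2, 0 <= y1 <= / 2 -> 0 <= y2 <= / 2 ->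
     Rabs (Q y1 - Q y2) <= A * Rabs (y1 - y2)) ->
  Lip_le (profile Q) A.
Proof.
  intros HA HB HL x y. unfold profile.
  destruct (M_bounds x) as [[x1a x1b] [y1a y1b]].
  destruct (M_bounds y) as [[x2a x2b] [y2a y2b]].
  unfold d, dist_pt. fold (h x) (h y) (ht x) (ht y).
  destruct (Req_EM_T (ht x) (ht y)) as [e|ne].
  - rewrite e.
    replace (h x * Q (ht y) - h y * Q (ht y)) with (Q (ht y) * (h x - h y)) by ring.
    rewrite Rabs_mult. apply Rmult_le_compat_r; [apply Rabs_pos|]. apply HB; lra.
  - pose proof (HB _ (conj y1a y1b)) as B1. pose proof (HB _ (conj y2a y2b)) as B2.
    pose proof (HL _ _ (conj y1a y1b) (conj y2a y2b)) as L12.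
    pose proof (Rabs_pos (ht x - ht y)).
    assert (via_left : Rabs (h x * Q (ht x) - h y * Q (ht y)) <= A * (h x + h y)).
    { eapply Rle_trans; [apply Rabs_triang|]. rewrite Rabs_Ropp, !Rabs_mult.
      rewrite (Rabs_right (h x)) by lra. rewrite (Rabs_right (h y)) by lra.
      pose proof (Rmult_le_compat_l (h x) _ _ x1a B1).
      pose proof (Rmult_le_compat_l (h y) _ _ x2a B2). nra. }
    assert (via_right : Rabs (h x * Q (ht x) - h y * Q (ht y))
                        <= A * (Rabs (ht x - ht y) + (2 - (h x + h y)))).
    { replace (h x * Q (ht x) - h y * Q (ht y)) with
        ((Q (ht x) - Q (ht y)) + (- ((1 - h x) * Q (ht x)) + (1 - h y) * Q (ht y))) by ring.
      eapply Rle_trans; [apply Rabs_triang|].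
      eapply Rle_trans; [apply Rplus_le_compat_l; apply Rabs_triang|].
      rewrite Rabs_Ropp, !Rabs_mult.
      rewrite (Rabs_right (1 - h x)) by lra. rewrite (Rabs_right (1 - h y)) by lra.
      assert (Hx' : 0 <= 1 - h x) by lra. assert (Hy' : 0 <= 1 - h y) by lra.
      pose proof (Rmult_le_compat_l (1 - h x) _ _ Hx' B1).
      pose proof (Rmult_le_compat_l (1 - h y) _ _ Hy' B2). nra. }
    unfold Rmin. destruct (Rle_dec _ _); nra.
Qed.

Lemma admissible_Lip Q : admissible Q -> Lip_le (profile Q) 1.
Proof.
  intros [HB HS]. apply profile_Lip; [lra | exact HB |].
  intros y1 y2 H1 H2. eapply Rle_trans; [apply HS; auto|].
  apply Rmult_le_compat_r; [apply Rabs_pos | lra].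
Qed.

(* Along S_n, f - f(q) h equals h * (Q(2^-n) - Q 0), whose slope is at most
   4^-n. *)
Lemma profile_Sn_cond Q : slope_bound Q -> Sn_cond (profile Q).
Proof.
  intros HS eps Heps.
  destruct (inv_pow2_small eps Heps) as [N HN].
  exists N. intros n Hn x y Sx Sy.
  assert (ex : ht x = / 2 ^ n) by (destruct Sx as [k [_ [_ E]]]; exact E).
  assert (ey : ht y = / 2 ^ n) by (destruct Sy as [k [_ [_ E]]]; exact E).
  rewrite (d_same_level x y) by congruence.
  unfold profile. change (h qM) with 1. change (ht qM) with 0. rewrite ex, ey.
  replace (h x * Q (/ 2 ^ n) - 1 * Q 0 * h x - (h y * Q (/ 2 ^ n) - 1 * Q 0 * h y))
    with ((h x - h y) * (Q (/ 2 ^ n) - Q 0)) by ring.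
  rewrite Rabs_mult, Rmult_comm. apply Rmult_le_compat_r; [apply Rabs_pos|].
  pose proof (HN n Hn).
  assert (0 < / 2 ^ n) by (apply Rinv_0_lt_compat, pow2_pos).
  destruct (M_bounds x) as [_ [_ Hhalf]]. rewrite ex in Hhalf.
  eapply Rle_trans; [apply HS; lra|].
  rewrite Rminus_0_r, Rabs_right by lra. nra.
Qed.

(* Near a point of V at height 0 the slope factor y1 + y2 is small; near a
   point at positive height, V is locally a single point. *)
Lemma profile_V_locally_flat Q : slope_bound Q -> V_locally_flat (profile Q).
Proof.
  intros HS z Vz eps Heps.
  destruct (Req_dec (ht z) 0) as [z0|zpos].
  - exists (Rmin (eps / 2) 1). split; [apply Rmin_glb_lt; lra|].
    intros x y Vx Vy _ Hx Hy.
    pose proof (Rmin_l (eps / 2) 1); pose proof (Rmin_r (eps / 2) 1).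
    assert (low : forall w, d w z < Rmin (eps / 2) 1 -> 0 <= ht w < eps / 2 /\ ht w <= / 2).
    { intros w Hw. destruct (M_bounds w) as [_ [? ?]]. destruct (d_ge_coords w z) as [G _].
      rewrite z0, Rminus_0_r, Rabs_right in G by lra. lra. }
    destruct (low x Hx) as [lx ux]; destruct (low y Hy) as [ly uy].
    unfold profile.
    rewrite (V_same_side x z), (V_same_side y z) by (auto; lra).
    replace (h z * Q (ht x) - h z * Q (ht y)) with (h z * (Q (ht x) - Q (ht y))) by ring.
    rewrite Rabs_mult. destruct (M_bounds z) as [[hz0 hz1] _].
    rewrite Rabs_right by lra.
    pose proof (HS (ht x) (ht y) ltac:(lra) ltac:(lra)).
    destruct (d_ge_coords x y) as [Dxy _]. pose proof (Rabs_pos (ht x - ht y)).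
    assert (Rabs (Q (ht x) - Q (ht y)) <= eps * d x y) by nra.
    pose proof (Rabs_pos (Q (ht x) - Q (ht y))). nra.
  - destruct (M_bounds z) as [_ [zge _]].
    assert (zp : 0 < ht z) by lra.
    exists (Rmin 1 (ht z / 2)). split; [apply Rmin_glb_lt; lra|].
    pose proof (Rmin_l 1 (ht z / 2)); pose proof (Rmin_r 1 (ht z / 2)).
    assert (same : forall w, d w z < Rmin 1 (ht z / 2) -> ht w = ht z).
    { intros w Hw. destruct (Req_dec (ht w) (ht z)) as [e|ne]; auto.
      pose proof (level_gap z w zp ne). destruct (d_ge_coords w z). lra. }
    intros x y Vx Vy _ Hx Hy. unfold profile.
    rewrite (same x Hx), (same y Hy), (V_same_side x z), (V_same_side y z) by (auto; lra).
    unfold Rminus; rewrite Rplus_opp_r, Rabs_R0.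
    apply Rmult_le_pos; [lra | apply d_nonneg].
Qed.

Lemma admissible_inY Q : admissible Q -> inY (profile Q).
Proof.
  intros HQ. split; [|split].
  - split; [unfold profile, h; simpl; ring | exists 1; apply admissible_Lip, HQ].
  - apply profile_Sn_cond, HQ.
  - apply profile_V_locally_flat, HQ.
Qed.

Lemma slope_bound_of_factor (Q : R -> R) (K : R -> R -> R) :
  (forall y1 y2, Q y1 - Q y2 = (y1 - y2) * (y1 + y2) * K y1 y2) ->
  (forall y1 y2, 0 <= y1 <= / 2 -> 0 <= y2 <= / 2 -> Rabs (K y1 y2) <= 1) ->
  slope_bound Q.
Proof.
  intros E HK y1 y2 H1 H2. rewrite E, !Rabs_mult, (Rabs_right (y1 + y2)) by lra.
  pose proof (HK y1 y2 H1 H2). pose proof (Rabs_pos (y1 - y2)).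
  assert (0 <= Rabs (y1 - y2) * (y1 + y2)) by (apply Rmult_le_pos; lra). nra.
Qed.

(* The profiles of the basis of E, and the "tangent" profiles in E that touch
   the value 1 at y^2 = s. *)
Definition Qf (y : R) : R := 1 - y ^ 4.
Definition Qg (y : R) : R := y ^ 2.
Definition tangent_weight (s : R) : R := / (1 + s * s).
Definition Qtan (s y : R) : R :=
  tangent_weight s * Qf y + 2 * tangent_weight s * s * Qg y.

Lemma Qtan_eq s y : Qtan s y = 1 - tangent_weight s * (y ^ 2 - s) ^ 2.
Proof. unfold Qtan, Qf, Qg, tangent_weight. field. nra. Qed.

Lemma tangent_weight_bounds s : 0 < tangent_weight s <= 1.
Proof.
  unfold tangent_weight. split; [apply Rinv_0_lt_compat; nra|].
  rewrite <- Rinv_1. apply Rinv_le_contravar; nra.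
Qed.

Lemma Qf_admissible : admissible Qf.
Proof.
  split.
  - intros y Hy. unfold Qf. apply Rabs_le.
    assert (0 <= y ^ 2 <= 1) by nra.
    replace (y ^ 4) with (y ^ 2 * y ^ 2) by ring. nra.
  - apply (slope_bound_of_factor _ (fun y1 y2 => - (y1 ^ 2 + y2 ^ 2))).
    + intros; unfold Qf; ring.
    + intros y1 y2 H1 H2. apply Rabs_le. nra.
Qed.

Lemma Qg_admissible : admissible Qg.
Proof.
  split.
  - intros y Hy. unfold Qg. apply Rabs_le. nra.
  - apply (slope_bound_of_factor _ (fun _ _ => 1)).
    + intros; unfold Qg; ring.
    + intros; rewrite Rabs_R1; lra.
Qed.

Lemma Qtan_admissible s : 0 <= s <= / 4 -> admissible (Qtan s).
Proof.
  intros Hs. pose proof (tangent_weight_bounds s). split.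
  - intros y Hy. rewrite Qtan_eq. apply Rabs_le.
    assert (0 <= y ^ 2 <= / 4) by nra.
    assert (0 <= (y ^ 2 - s) ^ 2 <= 1).
    { split; [apply pow2_ge_0|]. replace ((y ^ 2 - s) ^ 2) with ((y ^ 2 - s) * (y ^ 2 - s)) by ring.
      nra. }
    assert (0 <= tangent_weight s * (y ^ 2 - s) ^ 2 <= 1)
      by (split; [apply Rmult_le_pos|]; nra).
    lra.
  - apply (slope_bound_of_factor _
      (fun y1 y2 => - tangent_weight s * (y1 ^ 2 + y2 ^ 2 - 2 * s))).
    + intros; rewrite !Qtan_eq; ring.
    + intros y1 y2 H1 H2. rewrite Rabs_mult, Rabs_Ropp, Rabs_right by lra.
      assert (0 <= y1 ^ 2 <= / 4) by nra. assert (0 <= y2 ^ 2 <= / 4) by nra.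
      assert (Rabs (y1 ^ 2 + y2 ^ 2 - 2 * s) <= 1) by (apply Rabs_le; lra).
      pose proof (Rabs_pos (y1 ^ 2 + y2 ^ 2 - 2 * s)). nra.
Qed.

Definition basis (i : nat) : Mpt -> R :=
  match i with O => profile Qf | _ => profile Qg end.

Lemma fsum_ext m (u v : nat -> R) :
  (forall i, (i < m)%nat -> u i = v i) -> fsum m u = fsum m v.
Proof.
  induction m; intros H; simpl; auto.
  rewrite IHm by (intros; apply H; lia). rewrite H by lia. reflexivity.
Qed.

Lemma fsum_minus m (u v : nat -> R) : fsum m (fun i => u i - v i) = fsum m u - fsum m v.
Proof. induction m; simpl; [ring|]. rewrite IHm. ring. Qed.

Lemma fsum_bound m (lam u : nat -> R) M :
  (forall i, (i < m)%nat -> 0 <= lam i) -> (forall i, (i < m)%nat -> u i <= M) ->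
  fsum m (fun i => lam i * u i) <= M * fsum m lam.
Proof.
  induction m; intros H1 H2; simpl; [lra|].
  assert (fsum m (fun i => lam i * u i) <= M * fsum m lam)
    by (apply IHm; intros; [apply H1 | apply H2]; lia).
  assert (lam m * u m <= lam m * M) by (apply Rmult_le_compat_l; [apply H1 | apply H2]; lia).
  lra.
Qed.

Lemma fsum_indicator m i (u : nat -> R) : (i < m)%nat ->
  fsum m (fun j => (if Nat.eq_dec j i then 1 else 0) * u j) = u i.
Proof.
  induction m; intros Hi; simpl; [lia|].
  destruct (Nat.eq_dec m i) as [->|ne].
  - rewrite (fsum_ext _ _ (fun _ => 0)).
    + assert (Hz : forall k, fsum k (fun _ => 0) = 0) by (induction k; simpl; lra).
      rewrite Hz. ring.
    + intros j Hj. destruct (Nat.eq_dec j i); [lia | ring].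
  - rewrite IHm by lia. ring.
Qed.

Lemma generator_in_conv m (c : nat -> Mpt -> R) i : (i < m)%nat -> in_conv m c (c i).
Proof.
  intros Hi. exists (fun j => if Nat.eq_dec j i then 1 else 0). split; [|split].
  - intros j _. destruct (Nat.eq_dec j i); lra.
  - rewrite (fsum_ext m _ (fun j => (if Nat.eq_dec j i then 1 else 0) * 1)) by (intros; ring).
    apply (fsum_indicator m i (fun _ => 1) Hi).
  - intros x. symmetry. apply (fsum_indicator m i (fun j => c j x) Hi).
Qed.

Lemma finite_max_lt1 m (u : nat -> R) : (forall i, (i < m)%nat -> u i < 1) ->
  exists M, M < 1 /\ forall i, (i < m)%nat -> u i <= M.
Proof.
  induction m; intros H.
  - exists 0. split; [lra | intros; lia].
  - destruct IHm as [M [HM HM']]; [intros; apply H; lia|].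
    exists (Rmax M (u m)). split.
    + apply Rmax_lub_lt; [exact HM | apply H; lia].
    + intros i Hi. destruct (Nat.eq_dec i m) as [->|ne]; [apply Rmax_r|].
      eapply Rle_trans; [apply HM'; lia | apply Rmax_l].
Qed.

Lemma convex_comb_ge1 m (lam u : nat -> R) :
  (forall i, (i < m)%nat -> 0 <= lam i) -> fsum m lam = 1 ->
  fsum m (fun i => lam i * u i) = 1 -> exists i, (i < m)%nat /\ 1 <= u i.
Proof.
  intros H1 H2 H3. apply NNPP. intros Hn.
  assert (forall i, (i < m)%nat -> u i < 1).
  { intros i Hi. apply Rnot_le_lt. intros Hu. apply Hn. exists i; auto. }
  destruct (finite_max_lt1 m u H) as [M [HM HM']].
  pose proof (fsum_bound m lam u M H1 HM') as B. rewrite H2, H3 in B. lra.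
Qed.

Lemma pigeonhole m (P : nat -> nat -> Prop) :
  (forall j, (j <= m)%nat -> exists i, (i < m)%nat /\ P j i) ->
  exists j1 j2 i, (j1 < j2 <= m)%nat /\ (i < m)%nat /\ P j1 i /\ P j2 i.
Proof.
  revert P. induction m; intros P H.
  - destruct (H 0%nat) as [i [Hi _]]; lia.
  - destruct (H (S m)) as [i0 [Hi0 P0]]; [lia|].
    destruct (classic (exists j, (j <= m)%nat /\ P j i0)) as [[j [Hj Pj]]|Hno].
    + exists j, (S m), i0. repeat split; auto; lia.
    + (* box i0 is used only by S m: merge it into box m and recurse *)
      set (merge i := if Nat.eq_dec i i0 then m else i).
      destruct (IHm (fun j i => P j (merge i))) as [j1 [j2 [i [Hj [Hi [A B]]]]]].
      * intros j Hj. destruct (H j) as [i [Hi Pi]]; [lia|].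
        assert (i <> i0) by (intros ->; apply Hno; eauto).
        destruct (Nat.eq_dec i m) as [->|ne].
        -- exists i0. split; [lia|]. unfold merge.
           destruct (Nat.eq_dec i0 i0); [auto | contradiction].
        -- exists i. split; [lia|]. unfold merge.
           destruct (Nat.eq_dec i i0); [contradiction | auto].
      * exists j1, j2, (merge i). repeat split; auto; try lia. unfold merge.
        destruct (Nat.eq_dec i i0); lia.
Qed.

(* The quadratic s |-> a (1 - s^2) + b s cannot be <= 1 at s2 < s3 < s1 while
   being = 1 at s1 and >= 1 at s2: if a <= 0 the value at s2 is forced below
   1, and if a > 0 strict concavity forces the value at s3 above 1. *)
Lemma quadratic_no_two_touches a b s1 s2 s3 : 0 < s2 -> s2 < s3 -> s3 < s1 ->
  a * (1 - s1 * s1) + b * s1 <= 1 -> 1 <= a * (1 - s1 * s1) + b * s1 ->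
  1 <= a * (1 - s2 * s2) + b * s2 -> a * (1 - s3 * s3) + b * s3 <= 1 -> False.
Proof.
  intros h1 h2 h3 A1 A2 A3 A4.
  set (P := fun s => a * (1 - s * s) + b * s) in *.
  change (P s1 <= 1) in A1. change (1 <= P s1) in A2.
  change (1 <= P s2) in A3. change (P s3 <= 1) in A4.
  destruct (Rle_dec a 0) as [ha|ha].
  - assert (E : P s2 * s1 = P s1 * s2 + a * (s1 - s2) * (1 + s1 * s2)) by (unfold P; ring).
    assert (0 <= (s1 - s2) * (1 + s1 * s2)) by (apply Rmult_le_pos; nra).
    assert (0 <= - a * ((s1 - s2) * (1 + s1 * s2))) by (apply Rmult_le_pos; lra).
    assert (P s1 * s2 <= 1 * s2) by (apply Rmult_le_compat_r; lra).
    assert (1 * s1 <= P s2 * s1) by (apply Rmult_le_compat_r; lra). nra.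
  - assert (E : P s3 * (s1 - s2)
                = P s1 * (s3 - s2) + P s2 * (s1 - s3) + a * (s3 - s2) * (s1 - s3) * (s1 - s2))
      by (unfold P; ring).
    assert (0 < a * (s3 - s2) * (s1 - s3) * (s1 - s2)) by (repeat apply Rmult_lt_0_compat; lra).
    assert (1 * (s3 - s2) <= P s1 * (s3 - s2)) by (apply Rmult_le_compat_r; lra).
    assert (1 * (s1 - s3) <= P s2 * (s1 - s3)) by (apply Rmult_le_compat_r; lra).
    assert (P s3 * (s1 - s2) <= 1 * (s1 - s2)) by (apply Rmult_le_compat_r; lra). lra.
Qed.

Definition t (n : nat) : R := / 2 ^ (S n).

Lemma t_pos n : 0 < t n.
Proof. unfold t. apply Rinv_0_lt_compat, pow2_pos. Qed.

Lemma t_le_half n : t n <= / 2.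
Proof. unfold t. apply Rinv_le_contravar; [lra|]. apply pow2_ge2. lia. Qed.

Lemma t_decreasing a b : (a < b)%nat -> t b < t a.
Proof.
  intros H. pose proof (inv_pow2_lt (S a) (S b) ltac:(lia)).
  pose proof (t_pos a). unfold t in *. lra.
Qed.

Lemma inM_side (x : R) n : x = 0 \/ x = 1 -> inM (x, t n).
Proof.
  intros Hx. right; right. exists (S n). split; [lia|].
  destruct Hx as [->| ->].
  - exists 0%nat. split; [lia|]. simpl. split; [unfold Rdiv; ring | reflexivity].
  - exists (2 ^ S n)%nat. split; [lia|]. simpl fst; simpl snd. split; [|reflexivity].
    rewrite pow_INR. replace (INR 2) with 2 by (simpl; ring).
    field. apply Rgt_not_eq, pow2_pos.
Qed.

Definition P1 n : Mpt := exist inM (1, t n) (inM_side 1 n (or_intror eq_refl)).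
Definition P0 n : Mpt := exist inM (0, t n) (inM_side 0 n (or_introl eq_refl)).

Definition gap (n : nat) (G : Mpt -> R) : R := G (P1 n) - G (P0 n).

Lemma gap_le1 n G : Lip_le G 1 -> gap n G <= 1.
Proof.
  intros HL. specialize (HL (P1 n) (P0 n)).
  rewrite d_same_level in HL by reflexivity. unfold h in HL; simpl in HL.
  rewrite Rminus_0_r, Rabs_R1 in HL. unfold gap.
  pose proof (Rle_abs (G (P1 n) - G (P0 n))). lra.
Qed.

Lemma gap_on_span G : in_span 2 basis G ->
  exists a0 a1, forall n,
    gap n G = a0 * (1 - (t n ^ 2) * (t n ^ 2)) + a1 * (t n ^ 2).
Proof.
  intros [a Ha]. exists (a 0%nat), (a 1%nat). intros n. unfold gap. rewrite !Ha.
  simpl. unfold profile, Qf, Qg, h, ht; simpl. ring.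
Qed.

(* If the unit ball of E were the hull of c 0, ..., c (m-1), then for every
   n some vertex would reach gap n >= 1: the tangent function at s = t_n^2
   lies in the ball, has gap n = 1, and gap n is affine. *)
Lemma polytope_vertex_reaches_gap m c :
  (forall f, in_span 2 basis f /\ Lip_le f 1 <-> in_conv m c f) ->
  forall n, exists i, (i < m)%nat /\ 1 <= gap n (c i).
Proof.
  intros Hc n. set (s := t n ^ 2).
  pose proof (t_pos n). pose proof (t_le_half n).
  assert (Hs : 0 <= s <= / 4) by (unfold s; nra).
  destruct (proj1 (Hc (profile (Qtan s)))) as [lam [Hl1 [Hl2 Hl3]]].
  { split; [|apply admissible_Lip, Qtan_admissible, Hs].
    exists (fun i => match i with O => tangent_weight s | _ => 2 * tangent_weight s * s end).
    intros x. simpl. unfold profile, Qtan. ring. }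
  apply (convex_comb_ge1 m lam (fun i => gap n (c i)) Hl1 Hl2).
  transitivity (gap n (profile (Qtan s))).
  - unfold gap. rewrite (Hl3 (P1 n)), (Hl3 (P0 n)), <- fsum_minus.
    apply fsum_ext. intros; ring.
  - unfold gap, profile. rewrite !Qtan_eq. unfold h, ht, s; simpl. ring.
Qed.

Theorem proposition2p7 :
  exists (k : nat) (b : nat -> Mpt -> R),
    (forall i, (i < k)%nat -> inY (b i)) /\ ~ unit_ball_is_polytope k b.
Proof.
  exists 2%nat, basis. split.
  { intros [|[|i]] Hi; [apply admissible_inY, Qf_admissible
                       |apply admissible_inY, Qg_admissible | lia]. }
  intros [m [c Hc]].
  destruct (pigeonhole m (fun j i => 1 <= gap (2 * j) (c i)))
    as [j1 [j2 [i [Hj [Hi [A1 A2]]]]]].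
  { intros j _. apply (polytope_vertex_reaches_gap m c Hc). }
  destruct (proj2 (Hc (c i)) (generator_in_conv m c i Hi)) as [Hspan Hball].
  destruct (gap_on_span (c i) Hspan) as [a0 [a1 Ha]].
  pose proof (gap_le1 (2 * j1) _ Hball) as B1.
  pose proof (gap_le1 (S (2 * j1)) _ Hball) as B3.
  rewrite !Ha in A1, A2, B1, B3.
  pose proof (t_decreasing (2 * j1) (S (2 * j1)) ltac:(lia)).
  pose proof (t_decreasing (S (2 * j1)) (2 * j2) ltac:(lia)).
  pose proof (t_pos (2 * j2)).
  apply (quadratic_no_two_touches a0 a1 (t (2 * j1) ^ 2) (t (2 * j2) ^ 2) (t (S (2 * j1)) ^ 2));
    auto; nra.
Qed.
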